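(* Let $(U,\|\cdot\|)$ be a uniformly convex Banach space and let $Q\subseteq U$ be a nonempty, bounded, closed, convex set. Let $r>0$ and let $\alpha_n:Q\to\mathbb{R}$ ($n\in\mathbb{N}$) be functions with $\alpha_n(q)\to 1$ as $n\to\infty$ for every $q\in Q$. Suppose $T:Q\to Q$ satisfies: for all $p,q\in Q$ with $\|p-q\|<r$, $$\|T^np-T^nq\|\leq \alpha_n(q)\|p-q\|\quad\text{for every } n\in\mathbb{N}.$$ If there exists $q_0\in Q$ such that the asymptotic radius of the sequence $\{T^nq_0\}_n$ relative to $Q$ is less than $r$, then $T$ has a fixed point.
   Context: For a bounded sequence $\{x_n\}_n$ in $U$, its asymptotic radius relative to $Q$ is $\rho=\inf_{y\in Q}\limsup_{n\to\infty}\|x_n-y\|$. *)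

From HB Require Import structures.
From mathcomp Require Import all_boot all_order all_algebra.
From mathcomp Require Import all_classical all_reals all_analysis.
Set Implicit Arguments. Unset Strict Implicit. Unset Printing Implicit Defensive.
Import Order.TTheory GRing.Theory Num.Theory.
Import numFieldNormedType.Exports.
Local Open Scope classical_set_scope.
Local Open Scope ring_scope.

Definition uniformly_convex {R : realType} (V : normedModType R) : Prop :=
  forall eps : R, 0 < eps -> eps <= 2 ->
    exists2 delta : R, 0 < delta &
      forall x y : V, `|x| <= 1 -> `|y| <= 1 -> eps <= `|x - y| ->
        `|(2 : R)^-1 *: (x + y)| <= 1 - delta.

Definition convex_subset {R : realType} (V : normedModType R) (Q : set V) : Prop :=
  forall x y (t : R), Q x -> Q y -> 0 <= t -> t <= 1 ->
    Q (t *: x + (1 - t) *: y).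

Definition bounded_subset {R : realType} (V : normedModType R) (Q : set V) : Prop :=
  exists M : R, forall x, Q x -> `|x| <= M.

Definition asymptotic_radius {R : realType} (V : normedModType R)
  (x : nat -> V) (Q : set V) : \bar R :=
  ereal_inf [set limn_esup (fun n => (`|x n - y|)%:E) | y in Q].

From HB Require Import structures.
From mathcomp Require Import all_boot all_order all_algebra.
From mathcomp Require Import all_classical all_reals all_analysis.
From mathcomp Require Import lra.
Import Order.TTheory GRing.Theory Num.Theory.
Import numFieldNormedType.Exports.
Local Open Scope classical_set_scope.
Local Open Scope ring_scope.

(* Let x_n = T^n q0 and rho its asymptotic radius.  By uniform convexity, points
   y of Q with limsup ||x_n - y|| close to rho are close to each other (otherwise
   their midpoint would beat rho), so such approximate centres form a Cauchy
   sequence whose limit z in Q is an asymptotic centre.  The hypothesis on T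
   gives limsup_n ||x_n - T^m z|| <= alpha_m(z) (rho + eps) with alpha_m(z) -> 1,
   so T^m z are approximate centres for large m, hence T^m z -> z; the same
   estimate with n = 1 makes T continuous at z within Q, so T z = z. *)

Section LimnEsup.
Variable R : realType.
Implicit Types (u : nat -> R) (c : R).
Local Open Scope ereal_scope.

Lemma limn_esup_le_near u c :
  (\forall n \near \oo, u n <= c)%R -> limn_esup (EFin \o u) <= c%:E.
Proof.
move=> uc; apply: (@le_trans _ _ (ereal_sup ((EFin \o u) @` [set n | (u n <= c)%R]))).
  by apply: ereal_inf_lbound; exists [set n | (u n <= c)%R].
by apply: ge_ereal_sup => _ [n /= unc <-]; rewrite lee_fin.
Qed.

Lemma limn_esup_lt_near u c :
  limn_esup (EFin \o u) < c%:E -> \forall n \near \oo, (u n < c)%R.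
Proof.
move=> /ereal_inf_lt[_ [V ooV <-]] supVc; apply: filterS ooV => n Vn.
by rewrite -lte_fin; apply: le_lt_trans supVc; apply: ereal_sup_ubound; exists n.
Qed.

End LimnEsup.

Section AsymptoticRadius.
Context {R : realType} {V : normedModType R} {x : nat -> V} {Q : set V}.
Local Open Scope ereal_scope.

Lemma asymptotic_radius_ge0 : 0 <= asymptotic_radius x Q.
Proof.
apply: le_ereal_inf_tmp => _ [y _ <-]; apply: limf_esup_ge0 => [|n].
  exact: filter_not_empty.
by rewrite lee_fin.
Qed.

Lemma asymptotic_radius_le_near y (c : R) : Q y ->
  (\forall n \near \oo, `|x n - y| <= c)%R -> asymptotic_radius x Q <= c%:E.
Proof.
move=> Qy /limn_esup_le_near; apply: le_trans.
by apply: ereal_inf_lbound; exists y.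
Qed.

Lemma asymptotic_radius_lt_near (c : R) : asymptotic_radius x Q < c%:E ->
  exists2 y, Q y & \forall n \near \oo, (`|x n - y| < c)%R.
Proof.
by move=> /ereal_inf_lt[_ [y Qy <-] /limn_esup_lt_near]; exists y.
Qed.

End AsymptoticRadius.

Lemma convex_midpoint {R : realType} {V : normedModType R} {Q : set V} {y1 y2 : V} :
  convex_subset Q -> Q y1 -> Q y2 -> Q (2^-1 *: (y1 + y2)).
Proof.
move=> convQ Qy1 Qy2; have := convQ _ _ 2^-1 Qy1 Qy2.
by rewrite scalerDr (_ : 1 - 2^-1 = 2^-1); [apply; lra | lra].
Qed.

Section UniformConvexity.
Context {R : realType} {V : normedModType R}.
Hypothesis convV : uniformly_convex V.

Lemma uniformly_convex_midpoint eps : 0 < eps -> eps <= 2 ->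
  exists2 delta : R, 0 < delta & forall (c : R) (a y1 y2 : V), 0 < c ->
    `|a - y1| <= c -> `|a - y2| <= c -> eps * c <= `|y1 - y2| ->
    `|a - 2^-1 *: (y1 + y2)| <= (1 - delta) * c.
Proof.
move=> eps_gt0 eps_le2; have [delta delta_gt0 convVe] := convV _ eps_gt0 eps_le2.
exists delta => // c a y1 y2 c_gt0 ay1c ay2c y12.
have normZc (v : V) : `|c^-1 *: v| = `|v| / c.
  by rewrite normrZ gtr0_norm ?invr_gt0 // mulrC.
have := convVe (c^-1 *: (a - y1)) (c^-1 *: (a - y2)).
rewrite -scalerDr -scalerBr scalerA mulrC -scalerA !normZc !ler_pdivrMr // !mul1r.
have -> : a - y1 - (a - y2) = y2 - y1 by rewrite opprB addrC addrA subrK.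
have -> : 2^-1 *: (a - y1 + (a - y2)) = a - 2^-1 *: (y1 + y2).
  rewrite addrACA -opprD scalerBr; congr (_ - _).
  by rewrite scalerDr -scalerDl (_ : 2^-1 + 2^-1 = 1) ?scale1r //; lra.
by rewrite ler_pdivlMr // (distrC y2); apply.
Qed.

End UniformConvexity.

Section AsymptoticCenter.
Context {R : realType} {V : normedModType R} {x : nat -> V} {Q : set V} {rho : R}.
Hypothesis radius : asymptotic_radius x Q = rho%:E.

Lemma radius_ge0 : 0 <= rho.
Proof. by rewrite -lee_fin -radius; exact: asymptotic_radius_ge0. Qed.

Lemma radius_le_near y c : Q y ->
  (\forall n \near \oo, `|x n - y| <= c) -> rho <= c.
Proof. by move=> Qy /(asymptotic_radius_le_near y c Qy); rewrite radius lee_fin. Qed.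

Lemma approx_center_exists eps : 0 < eps ->
  exists2 y, Q y & \forall n \near \oo, `|x n - y| <= rho + eps.
Proof.
move=> eps_gt0; have : (asymptotic_radius x Q < (rho + eps)%:E)%E.
  by rewrite radius lte_fin ltrDl.
move=> /asymptotic_radius_lt_near[y Qy xy]; exists y => //.
by apply: filterS xy => n /ltW.
Qed.

Hypotheses (convV : uniformly_convex V) (convQ : convex_subset Q).

Lemma approx_centers_close eta : 0 < eta ->
  exists2 eps, 0 < eps & forall y1 y2, Q y1 -> Q y2 ->
    (\forall n \near \oo, `|x n - y1| <= rho + eps) ->
    (\forall n \near \oo, `|x n - y2| <= rho + eps) ->
    `|y1 - y2| <= eta.
Proof.
move=> eta_gt0; have rho_ge0 := radius_ge0.
set e := Order.min (eta / (rho + eta)) 2.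
have e_gt0 : 0 < e by rewrite lt_min divr_gt0 //; lra.
have e_le : e <= eta / (rho + eta) by rewrite ge_min lexx.
have e_le2 : e <= 2 by rewrite ge_min lexx orbT.
have [delta delta_gt0 midpoint_le] := uniformly_convex_midpoint convV _ e_gt0 e_le2.
set eps := Order.min (eta / 4) (delta * eta / 8).
have eps_le1 : eps <= eta / 4 by rewrite ge_min lexx.
have eps_le2 : eps <= delta * eta / 8 by rewrite ge_min lexx orbT.
have eps_gt0 : 0 < eps by rewrite lt_min !divr_gt0 ?mulr_gt0 //; lra.
exists eps => // y1 y2 Qy1 Qy2 xy1 xy2; rewrite leNgt; apply/negP => y12_gt.
set c := rho + eps.
have c_gt0 : 0 < c by rewrite /c; lra.
have y12_le : `|y1 - y2| <= c + c.
  have [n [xy1n xy2n]] := filter_ex (filterI xy1 xy2).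
  have -> : y1 - y2 = (x n - y2) - (x n - y1) by rewrite opprB [RHS]addrC addrA subrK.
  by apply: le_trans (ler_normB _ _) _; rewrite addrC lerD.
have ec_le : e * c <= `|y1 - y2|.
  apply: le_trans (ltW y12_gt); apply: (@le_trans _ _ (e * (rho + eta))).
    by apply: ler_wpM2l; [exact: ltW | rewrite /c; lra].
  by rewrite -ler_pdivlMr //; lra.
have : rho <= (1 - delta) * c.
  apply: (radius_le_near _ _ (convex_midpoint convQ Qy1 Qy2)).
  by apply: filterS2 xy1 xy2 => n xy1n xy2n; exact: midpoint_le.
rewrite /c => rho_le; have rho_gt : eta / 4 < rho by move: y12_le; rewrite /c; lra.
have : delta * rho <= delta * (eta / 8) by nra.
by rewrite ler_pM2l //; lra.
Qed.

End AsymptoticCenter.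

Lemma asymptotic_center_exists {R : realType} {V : completeNormedModType R}
    {x : nat -> V} {Q : set V} {rho : R} :
  uniformly_convex V -> convex_subset Q -> closed Q ->
  asymptotic_radius x Q = rho%:E ->
  exists2 z, Q z & forall eps, 0 < eps -> \forall n \near \oo, `|x n - z| <= rho + eps.
Proof.
move=> convV convQ closedQ radius.
have /choice[y yP] : forall k, exists y,
    Q y /\ \forall n \near \oo, `|x n - y| <= rho + k.+1%:R^-1.
  move=> k; have [|y Qy xy] := approx_center_exists radius k.+1%:R^-1.
    by rewrite invr_gt0.
  by exists y.
have y_near eps : 0 < eps ->
    \forall k \near \oo, \forall n \near \oo, `|x n - y k| <= rho + eps.
  move=> eps_gt0; apply: filterS (near_infty_natSinv_lt (PosNum eps_gt0)) => k k_lt.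
  by apply: filterS (yP k).2 => n /le_trans; apply; rewrite lerD2l ltW.
have y_cvg : cvgn y.
  apply/cauchy_cvgP/cauchy_exP => eps eps_gt0; have eps2_gt0 : 0 < eps / 2 by lra.
  have [e e_gt0 close] := approx_centers_close radius convV convQ _ eps2_gt0.
  have [k0 k0P] := filter_ex (y_near e e_gt0).
  exists (y k0); apply: filterS (y_near e e_gt0) => k kP /=.
  rewrite -ball_normE /=; apply: le_lt_trans (close _ _ (yP k0).1 (yP k).1 k0P kP) _.
  lra.
exists (limn y) => [|eps eps_gt0].
  by apply: closed_cvg closedQ _ _ y_cvg; apply: nearW => k; exact: (yP k).1.
have eps2_gt0 : 0 < eps / 2 by lra.
have /cvgrPdist_le/(_ _ eps2_gt0) yz := y_cvg.
have [k [zyk xyk]] := filter_ex (filterI yz (y_near _ eps2_gt0)).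
apply: filterS xyk => n xnyk; apply: le_trans (ler_distD (y k) _ _) _.
by rewrite (distrC (y k)); lra.
Qed.

Section Iterates.
Context {R : realType} {U : normedModType R} {Q : set U} {r : R}
  {alpha : nat -> U -> R} {T : U -> U}.
Hypotheses (TQ : forall q, Q q -> Q (T q))
  (T_lip : forall p q, Q p -> Q q -> `|p - q| < r ->
     forall n : nat, (0 < n)%N -> `|iter n T p - iter n T q| <= alpha n q * `|p - q|).

Lemma Q_iter n {y} : Q y -> Q (iter n T y).
Proof. by elim: n => [|n IHn] //= /IHn; apply: TQ. Qed.

Lemma fixed_point_of_cvg_iter {z : U} : 0 < r -> Q z ->
  iter m T z @[m --> \oo] --> z -> T z = z.
Proof.
move=> r_gt0 Qz iter_cvg; set L := `|alpha 1%N z| + 1.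
have L_gt0 : 0 < L by rewrite ltr_pwDr.
have Titer_cvg : iter m.+1 T z @[m --> \oo] --> T z.
  apply/cvgrPdist_le => e e_gt0; near=> m.
  have zm_lt : `|z - iter m T z| < r by near: m; move/cvgrPdist_lt : iter_cvg; apply.
  have zm_le : `|z - iter m T z| * L <= e.
    rewrite -ler_pdivlMr //; near: m; move/cvgrPdist_le : iter_cvg; apply.
    by rewrite divr_gt0.
  have mz_lt : `|iter m T z - z| < r by rewrite distrC.
  have /= Tle := T_lip _ _ (Q_iter m Qz) Qz mz_lt 1%N isT.
  rewrite distrC; apply: le_trans Tle _; rewrite (distrC (iter m T z)).
  apply: le_trans (ler_wpM2r (normr_ge0 _) (ler_norm _)) _.
  by rewrite /L mulrDr mulr1 mulrC in zm_le; have := normr_ge0 (z - iter m T z); lra.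
apply: (cvg_unique _ Titer_cvg); first exact: norm_hausdorff.
by move: iter_cvg; rewrite -cvg_shiftS.
Unshelve. all: by end_near. Qed.

Lemma near_dist_iter {q0 z : U} {rho e : R} {m : nat} :
  Q q0 -> Q z -> (0 < m)%N -> 0 <= alpha m z -> rho + e < r ->
  (\forall n \near \oo, `|iter n T q0 - z| <= rho + e) ->
  \forall n \near \oo, `|iter n T q0 - iter m T z| <= alpha m z * (rho + e).
Proof.
move=> Qq0 Qz m_gt0 alpha_ge0 lt_r [N _ near_z]; exists (N + m)%N => // n /= le_n.
have m_le : (m <= n)%N by apply: leq_trans le_n; rewrite leq_addl.
have near_zn : `|iter (n - m) T q0 - z| <= rho + e.
  by apply: near_z; rewrite /= leq_subRL // addnC.
rewrite -(subnKC m_le) iterD.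
apply: le_trans (T_lip _ _ (Q_iter _ Qq0) Qz (le_lt_trans near_zn lt_r) _ m_gt0) _.
exact: ler_wpM2l.
Qed.

Lemma iter_cvg_asymptotic_center {q0 z : U} {rho : R} :
  uniformly_convex U -> convex_subset Q -> Q q0 -> Q z ->
  asymptotic_radius (fun n => iter n T q0) Q = rho%:E -> rho < r ->
  alpha m z @[m --> \oo] --> (1 : R) ->
  (forall eps, 0 < eps -> \forall n \near \oo, `|iter n T q0 - z| <= rho + eps) ->
  iter m T z @[m --> \oo] --> z.
Proof.
move=> convU convQ Qq0 Qz radius rho_lt alpha_cvg center.
apply/cvgrPdist_le => eta eta_gt0.
have [eps eps_gt0 close] := approx_centers_close radius convU convQ _ eta_gt0.
set e := Order.min (eps / 2) ((r - rho) / 2).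
have e_gt0 : 0 < e by rewrite lt_min; apply/andP; split; lra.
have e_le1 : e <= eps / 2 by rewrite ge_min lexx.
have e_le2 : e <= (r - rho) / 2 by rewrite ge_min lexx orbT.
have e_lt : rho + e < r by lra.
have alpha_lt : \forall m \near \oo, alpha m z * (rho + e) < rho + eps.
  apply: (cvgr_lt _ (cvgM alpha_cvg (cvg_cst (rho + e)))).
  by rewrite mul1r; lra.
near=> m; rewrite distrC; apply: (close _ _ (Q_iter m Qz) Qz _ (center _ eps_gt0)).
have alpha_ge0 : 0 <= alpha m z by near: m; exact: (cvgr_ge _ alpha_cvg _ ltr01).
have m_gt0 : (0 < m)%N by near: m; exists 1%N.
apply: filterS (near_dist_iter Qq0 Qz m_gt0 alpha_ge0 e_lt (center _ e_gt0)).
by move=> n /le_trans; apply; apply: ltW; near: m.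
Unshelve. all: by end_near. Qed.

End Iterates.

Theorem mainTheorem2 (R : realType) (U : completeNormedModType R)
  (Q : set U) (r : R) (alpha : nat -> U -> R) (T : U -> U) :
  uniformly_convex U ->
  Q !=set0 -> bounded_subset Q -> closed Q -> convex_subset Q ->
  0 < r ->
  (forall q, Q q -> alpha n q @[n --> \oo] --> (1 : R)) ->
  (forall q, Q q -> Q (T q)) ->
  (forall p q, Q p -> Q q -> `|p - q| < r ->
     forall n : nat, (0 < n)%N ->
       `|iter n T p - iter n T q| <= alpha n q * `|p - q|) ->
  (exists2 q0, Q q0 &
     (asymptotic_radius (fun n => iter n T q0) Q < r%:E)%E) ->
  exists2 x, Q x & T x = x.
Proof.
move=> convU _ _ closedQ convQ r_gt0 alpha_cvg TQ T_lip [q0 Qq0 radius_lt].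
set rho := fine (asymptotic_radius (fun n => iter n T q0) Q).
have radius : asymptotic_radius (fun n => iter n T q0) Q = rho%:E.
  rewrite fineK // ge0_fin_numE ?asymptotic_radius_ge0 //.
  exact: lt_trans radius_lt (ltry r).
have rho_lt : rho < r by rewrite -lte_fin -radius.
have [z Qz center] := asymptotic_center_exists convU convQ closedQ radius.
exists z => //; apply: (fixed_point_of_cvg_iter TQ T_lip r_gt0 Qz).
exact: (iter_cvg_asymptotic_center TQ T_lip convU convQ Qq0 Qz radius rho_lt
  (alpha_cvg z Qz) center).
Qed.
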